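(* Let $\mathcal{H}$ be a separable infinite-dimensional complex Hilbert space, let $T\in\mathscr{B}(\mathcal{H})$ have dense range, let $\varepsilon>0$ and let $x_0\in\mathcal{H}$ with $\|x_0\|>\varepsilon$. Then the map $t\mapsto\|y_{tx_0,\varepsilon}\|$ is non-decreasing on the interval $\left]\frac{\varepsilon}{\|x_0\|},+\infty\right[$.
   Context: For $T\in\mathscr{B}(\mathcal{H})$ with dense range, $x\neq 0$ and $0<\varepsilon<\|x\|$, the extremal vector $y_{x,\varepsilon}$ is the unique vector $y_0\in\mathcal{H}$ with $\|Ty_0-x\|\leqslant\varepsilon$ and $\|y_0\|=\inf\{\|y\|:\|Ty-x\|\leqslant\varepsilon\}$. *)

From HB Require Import structures.
From mathcomp Require Import all_boot all_order all_algebra.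
From mathcomp Require Import all_classical all_reals all_analysis.
From mathcomp Require Import complex.
From mathcomp Require Export sesquilinear.
Import Order.TTheory GRing.Theory Num.Theory Num.Def.
Import numFieldNormedType.Exports.
Local Open Scope ring_scope.
Local Open Scope classical_set_scope.

(* A complex Hilbert space is a complete normed C-module H whose norm is
   induced by a (conjugate-symmetric, positive definite) inner product. *)

(* the norm of a vector as a real number (the norm of H takes values in
   R[i], but is always real and nonnegative) *)
Definition hnorm {R : realType} {H : normedModType R[i]} (x : H) : R :=
  complex.Re `|x|.

Definition inner_induces_norm {R : realType} {H : normedModType R[i]}
  (ip : {dot H for conjC}) : Prop :=
  forall x : H, `|x| ^+ 2 = ip x x.

Definition separable_space (T : topologicalType) : Prop :=
  exists D : set T, countable D /\ dense D.

Definition infinite_dimensional {K : numDomainType} (V : lmodType K) : Prop :=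
  forall n : nat, exists v : 'I_n -> V,
    forall c : 'I_n -> K, \sum_(i < n) c i *: v i = 0 -> forall i, c i = 0.

Definition bounded_op {R : realType} {H : normedModType R[i]} (T : H -> H) : Prop :=
  exists M : R, forall x : H, hnorm (T x) <= M * hnorm x.

Definition dense_range {R : realType} {H : normedModType R[i]} (T : H -> H) : Prop :=
  dense (range T).

Definition is_extremal_vector {R : realType} {H : normedModType R[i]}
  (T : H -> H) (x : H) (eps : R) (y0 : H) : Prop :=
  hnorm (T y0 - x) <= eps /\
  hnorm y0 = inf [set hnorm y | y in [set y : H | hnorm (T y - x) <= eps]].

(* If ||T y - t2 x0|| <= eps and 0 < t1 <= t2, then c = t1/t2 lies in ]0, 1] and
   ||T (c y) - t1 x0|| = c ||T y - t2 x0|| <= eps, so c y is admissible for t1 x0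
   and has norm c ||y|| <= ||y||.  Taking y = y_{t2 x0, eps} gives the claim;
   the lower bound t1 > eps/||x0|| is only needed to make t1 positive. *)
From HB Require Import structures.
From mathcomp Require Import all_boot all_order all_algebra.
From mathcomp Require Import all_classical all_reals all_analysis.
From mathcomp Require Import complex sesquilinear.
Import Order.TTheory GRing.Theory Num.Theory Num.Def.
Import numFieldNormedType.Exports.
Local Open Scope ring_scope.
Local Open Scope classical_set_scope.

Section ExtremalVector.
Variables (R : realType) (H : normedModType R[i]).
Implicit Types (x y : H) (c eps : R).

Lemma hnorm_ge0 x : 0 <= hnorm x.
Proof.
by rewrite /hnorm; have := normr_ge0 x; case: `|x| => a b; rewrite lecE /= => /andP[].
Qed.

Lemma hnormZ c x : 0 <= c -> hnorm ((c%:C)%C *: x) = c * hnorm x.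
Proof.
move=> c_ge0; rewrite /hnorm normrZ ger0_norm; last by rewrite lecE /= eqxx c_ge0.
by case: `|x| => a b /=; rewrite mul0r subr0.
Qed.

Definition admissible (T : H -> H) x eps := [set y | hnorm (T y - x) <= eps].

Lemma extremal_vector_norm_le {T : H -> H} {x eps y0 y} :
  is_extremal_vector T x eps y0 -> admissible T x eps y -> hnorm y0 <= hnorm y.
Proof.
move=> [_ ->] y_adm; apply: ge_inf; last by exists y.
by exists 0 => _ [z _ <-]; exact: hnorm_ge0.
Qed.

Lemma admissibleZ {T : {linear H -> H}} {x eps c y} :
  0 <= c -> c <= 1 -> admissible T x eps y ->
  admissible T ((c%:C)%C *: x) eps ((c%:C)%C *: y).
Proof.
move=> c_ge0 c_le1; rewrite /admissible /= => y_adm.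
rewrite linearZ -scalerBr hnormZ //.
by rewrite -[eps]mul1r ler_pM ?hnorm_ge0.
Qed.

Lemma extremal_vector_norm_scale (T : {linear H -> H}) x eps t1 t2 y1 y2 :
  0 < t1 <= t2 ->
  is_extremal_vector T ((t1%:C)%C *: x) eps y1 ->
  is_extremal_vector T ((t2%:C)%C *: x) eps y2 ->
  hnorm y1 <= hnorm y2.
Proof.
move=> /andP[t1_gt0 t12] y1_ext [y2_adm _].
have t2_gt0 : 0 < t2 by exact: lt_le_trans t12.
set c := t1 / t2.
have c_ge0 : 0 <= c by rewrite divr_ge0 // ltW.
have c_le1 : c <= 1 by rewrite ler_pdivrMr // mul1r.
have c_t2 : (c%:C)%C *: ((t2%:C)%C *: x) = (t1%:C)%C *: x.
  by rewrite scalerA -rmorphM /= divfK // gt_eqF.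
have cy2_adm := admissibleZ c_ge0 c_le1 y2_adm; rewrite c_t2 in cy2_adm.
apply: le_trans (extremal_vector_norm_le y1_ext cy2_adm) _.
by rewrite hnormZ // -[X in _ <= X]mul1r ler_pM ?hnorm_ge0.
Qed.

End ExtremalVector.

Theorem mainTheorem9 (R : realType) (H : completeNormedModType R[i])
  (ip : {dot H for conjC}) (hip : inner_induces_norm ip)
  (hsep : separable_space H) (hinf : infinite_dimensional H)
  (T : {linear H -> H}) (hTb : bounded_op T) (hTd : dense_range T)
  (eps : R) (heps : 0 < eps) (x0 : H) (hx0 : eps < hnorm x0) :
  forall (t1 t2 : R), eps / hnorm x0 < t1 -> t1 <= t2 ->
  forall y1 y2 : H,
    is_extremal_vector T ((t1%:C)%C *: x0) eps y1 ->
    is_extremal_vector T ((t2%:C)%C *: x0) eps y2 ->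
    hnorm y1 <= hnorm y2.
Proof.
move=> t1 t2 t1_gt t12 y1 y2; apply: extremal_vector_norm_scale.
have x0_gt0 : 0 < hnorm x0 by exact: lt_trans hx0.
by rewrite t12 andbT (lt_trans _ t1_gt) // divr_gt0.
Qed.
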